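(* Let $n\ge2$ and let $\mathbb{A}=(A_{ij})_{i,j=1}^n$ be an operator matrix as in the context. Assume that for every permutation $\pi$ of $\{1,\ldots,n\}$, $\mathbb{A}(\pi)_k$ is closed for every $k\in\{2,\ldots,n\}$. Then $\sigma(\mathbb{A})\subset\bigcap_{k=1}^nS^*_k(\mathbb{A})$.
   Context: Let $X_1,\ldots,X_n$ be complex Banach spaces and $X=X_1\times\cdots\times X_n$ with norm $\|x\|=\sum_i\|x_i\|_{X_i}$. For $i,j$, $A_{ij}:\mathcal{D}(A_{ij})\subset X_j\to X_i$ are linear, $A_{ii}$ closed, and for $i\ne j$ $A_{ij}$ is relatively $A_{jj}$-bounded ($\mathcal{D}(A_{jj})\subset\mathcal{D}(A_{ij})$ and $\|A_{ij}x\|\le\alpha\|x\|+\beta\|A_{jj}x\|$ for some $\alpha,\beta\ge0$). $\mathbb{A}=(A_{ij})$ acts on $\mathcal{D}(A_{11})\times\cdots\times\mathcal{D}(A_{nn})$ by $(\mathbb{A}x)_i=\sum_jA_{ij}x_j$. For a permutation $\pi$, $\mathbb{A}(\pi):=(A_{\pi^{-1}(i),\pi^{-1}(j)})_{i,j=1}^n$ acts on $X_{\pi^{-1}(1)}\times\cdots\times X_{\pi^{-1}(n)}$ with domain $\prod_i\mathcal{D}(A_{\pi^{-1}(i),\pi^{-1}(i)})$; $\mathbb{B}_k$ is the upper-left $k\times k$ block of such a matrix $\mathbb{B}$, with domain the product of the first $k$ diagonal domains. $\sigma(S)$ is the set of $\lambda$ for which $\lambda-S$ is not bijective from $\mathcal{D}(S)$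 with bounded inverse. For $j\ne k$ and $\lambda\notin\sigma(A_{kk})\cup\sigma(A_{jj})$ set \[ \mathcal{R}^*_{kj}(\lambda):=\sum_{i=1,i\ne k}^n\Big(\|A_{ik}(\lambda-A_{kk})^{-1}A_{kj}(\lambda-A_{jj})^{-1}\|+\|(1-\delta_{ij})A_{ij}(\lambda-A_{jj})^{-1}\|\Big), \] the modified Schur sets $S^*_{kj}(\mathbb{A}):=\sigma(A_{kk})\cup\sigma(A_{jj})\cup\{\lambda\notin\sigma(A_{kk})\cup\sigma(A_{jj}):\mathcal{R}^*_{kj}(\lambda)\ge1\}$, and $S^*_k(\mathbb{A}):=\bigcup_{j\ne k}S^*_{kj}(\mathbb{A})$. *)

From HB Require Import structures.
From mathcomp Require Import all_boot all_order all_algebra all_fingroup.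
From mathcomp Require Import all_classical all_reals all_analysis.
From mathcomp Require Export complex.
Import Order.TTheory GRing.Theory Num.Theory numFieldNormedType.Exports.



Unset Printing Implicit Defensive.

Local Open Scope classical_set_scope.
Local Open Scope ring_scope.

Section OperatorDefs.
Context {R : realType}.
Local Notation C := R[i].

(* real-valued norm (the C-valued norm `|x| is real; we take its real part) *)
Definition nrm {V : normedModType C} (x : V) : R := complex.Re `|x|.

Definition subspace {V : lmodType C} (D : set V) : Prop :=
  D 0 /\ forall (a : C) x y, D x -> D y -> D (a *: x + y).

Definition linear_on {U V : lmodType C} (D : set U) (T : U -> V) : Prop :=
  subspace D /\
  forall (a : C) x y, D x -> D y -> T (a *: x + y) = a *: T x + T y.

Definition closed_op {U V : normedModType C} (D : set U) (T : U -> V) : Prop :=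
  forall (u : nat -> U) (x : U) (y : V), (forall m, D (u m)) ->
    (fun m => nrm (u m - x)) @ \oo --> (0 : R) ->
    (fun m => nrm (T (u m) - y)) @ \oo --> (0 : R) ->
    D x /\ T x = y.

Definition rel_bounded {U V : normedModType C}
  (DS : set U) (S : U -> U) (DT : set U) (T : U -> V) : Prop :=
  DS `<=` DT /\ exists a b : R, 0 <= a /\ 0 <= b /\
    forall x, DS x -> nrm (T x) <= a * nrm x + b * nrm (S x).

Definition bdd_invertible {Z : Type} (nz : Z -> R) (Dom : set Z) (L : Z -> Z) : Prop :=
  exists Rv : Z -> Z,
    (forall y, Dom (Rv y) /\ L (Rv y) = y) /\
    (forall x, Dom x -> Rv (L x) = x) /\
    exists c : R, forall y, nz (Rv y) <= c * nz y.

Definition spectrum {V : normedModType C} (D : set V) (T : V -> V) : set C :=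
  [set l | ~ bdd_invertible (@nrm V) D (fun x => l *: x - T x)].

Definition is_resolvent {V : normedModType C} (D : set V) (T : V -> V)
  (l : C) (Rv : V -> V) : Prop :=
  (forall y, D (Rv y) /\ l *: Rv y - T (Rv y) = y) /\
  (forall x, D x -> Rv (l *: x - T x) = x).

Section Matrix.
Context {I : finType} (Y : I -> normedModType C).

Definition mdom (Dom : forall i, set (Y i)) : set (forall i, Y i) :=
  fun x => forall i, Dom i (x i).

Definition mapply (B : forall i j, Y j -> Y i) (x : forall i, Y i) : forall i, Y i :=
  fun i => \sum_(j : I) B i j (x j).

Definition mnorm (x : forall i, Y i) : R := \sum_(i : I) nrm (x i).

Definition mclosed (Dom : forall i, set (Y i)) (B : forall i j, Y j -> Y i) : Prop :=
  forall (u : nat -> forall i, Y i) (x y : forall i, Y i),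
    (forall m, mdom Dom (u m)) ->
    (fun m => mnorm (fun i => u m i - x i)) @ \oo --> (0 : R) ->
    (fun m => mnorm (fun i => mapply B (u m) i - y i)) @ \oo --> (0 : R) ->
    mdom Dom x /\ mapply B x = y.

Definition mspectrum (Dom : forall i, set (Y i)) (B : forall i j, Y j -> Y i) : set C :=
  [set l | ~ bdd_invertible mnorm (mdom Dom)
              (fun x i => l *: x i - mapply B x i)].
End Matrix.

Definition opnorm {U V : normedModType C} (T : U -> V) : \bar R :=
  ereal_sup [set (nrm (T x))%:E | x in [set x : U | nrm x <= 1]].

Section Schur.
Context {n : nat} (X : 'I_n -> normedModType C)
  (A : forall i j : 'I_n, X j -> X i) (D : forall i j : 'I_n, set (X j)).

(* R^*_{kj}(l), given the resolvents Rk = (l - A_kk)^{-1}, Rj = (l - A_jj)^{-1} *)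
Definition Rstar (k j : 'I_n) (Rk : X k -> X k) (Rj : X j -> X j) : \bar R :=
  (\sum_(i < n | i != k)
     (opnorm (fun x : X j => A i k (Rk (A k j (Rj x)))) +
      (if i == j then 0%E else opnorm (fun x : X j => A i j (Rj x)))))%E.

Definition Sstar_kj (k j : 'I_n) : set C :=
  [set l | spectrum (D k k) (A k k) l \/ spectrum (D j j) (A j j) l \/
     (~ spectrum (D k k) (A k k) l /\ ~ spectrum (D j j) (A j j) l /\
      exists (Rk : X k -> X k) (Rj : X j -> X j),
        is_resolvent (D k k) (A k k) l Rk /\ is_resolvent (D j j) (A j j) l Rj /\
        (1 <= Rstar k j Rk Rj)%E)].

Definition Sstar_k (k : 'I_n) : set C :=
  [set l | exists j : 'I_n, j != k /\ Sstar_kj k j l].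
End Schur.

End OperatorDefs.

(* If l lies outside S*_k(A), then l is in the resolvent set of every A_jj, and
   R_j = (l - A_jj)^-1 exists. Substituting x = R z turns (l - A) x = y into
   z_i - sum_{j <> i} K_ij z_j = y_i with K_ij = A_ij R_j. Solving the k-th
   equation for z_k and inserting it into the others leaves, for i <> k,
   z_i - sum_{j <> k} (K_ik K_kj + [i <> j] K_ij) z_j = y_i + K_ik y_k, whose
   operator matrix has column norms sum_{i <> k} ||K_ik K_kj + [i <> j] K_ij||
   <= R*_kj(l) < 1 in the l^1 product norm. Banach's fixed point theorem then
   inverts l - A with a bounded inverse, so l is not in sigma(A). *)

From HB Require Import structures.
From mathcomp Require Import all_boot all_order all_algebra all_fingroup.
From mathcomp Require Import all_classical all_reals all_analysis.
From mathcomp Require Import complex.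
From mathcomp.algebra_tactics Require Import lra.
Import Order.TTheory GRing.Theory Num.Theory numFieldNormedType.Exports.
Local Open Scope classical_set_scope.
Local Open Scope ring_scope.
Local Open Scope complex_scope.

Section RealNorm.
Context {R : realType} {V : normedModType R[i]}.
Implicit Types (x y : V).

Lemma norm_nrm x : `|x| = (nrm x)%:C.
Proof. by rewrite /nrm RRe_real. Qed.

Lemma nrm_ge0 x : 0 <= nrm x.
Proof. by have := normr_ge0 x; rewrite norm_nrm lecE => /andP[]. Qed.

Lemma ler_nrmD x y : nrm (x + y) <= nrm x + nrm y.
Proof. by rewrite -lecR rmorphD /= -!norm_nrm ler_normD. Qed.

Lemma nrmN x : nrm (- x) = nrm x.
Proof. by rewrite /nrm normrN. Qed.

Lemma nrm_distC x y : nrm (x - y) = nrm (y - x).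
Proof. by rewrite /nrm distrC. Qed.

Lemma nrm0 : nrm (0 : V) = 0.
Proof. by rewrite /nrm normr0. Qed.

Lemma nrm0_eq0 x : nrm x = 0 -> x = 0.
Proof. by move=> x0; apply/normr0_eq0; rewrite norm_nrm x0. Qed.

Lemma nrmZ (a : R[i]) x : nrm (a *: x) = complex.Re `|a| * nrm x.
Proof. by rewrite {1}/nrm normrZ (norm_nrm x) -(RRe_real (normr_real a)) -rmorphM. Qed.

Lemma ler_nrm_sum {I : Type} (r : seq I) (P : pred I) (F : I -> V) :
  nrm (\sum_(j <- r | P j) F j) <= \sum_(j <- r | P j) nrm (F j).
Proof.
elim/big_ind2: _ => [|a1 b1 a2 b2 h1 h2|//]; first by rewrite nrm0.
exact: le_trans (ler_nrmD _ _) (lerD h1 h2).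
Qed.

End RealNorm.

Lemma Re_norm_ge0 {R : realType} (a : R[i]) : 0 <= complex.Re `|a|.
Proof. by have := normr_ge0 a; rewrite lecE => /andP[]. Qed.

Lemma geometric_lt_eventually {R : realType} (c q : R) : 0 <= q < 1 ->
  forall e, 0 < e -> exists N, forall m, (N <= m)%N -> c * q ^+ m < e.
Proof.
move=> /andP[q0 q1] e e0.
have /cvgrPdist_lt/(_ e e0) [N _ HN] : (c * q ^+ m) @[m --> \oo] --> c * 0.
  by apply: cvgM; [exact: cvg_cst | apply: cvg_expr; rewrite ger0_norm].
exists N => m /HN; rewrite mulr0 sub0r normrN; exact: le_lt_trans (ler_norm _).
Qed.

Lemma le0_geometric {R : realType} (x c q : R) : 0 <= q < 1 ->
  (forall m, x <= c * q ^+ m) -> x <= 0.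
Proof.
move=> q01 xle; apply/ler_addgt0Pr => e e0; rewrite add0r.
have [N HN] := geometric_lt_eventually c _ q01 _ e0.
exact: le_trans (xle N) (ltW (HN N (leqnn N))).
Qed.

Lemma nrm_cauchy_cvg {R : realType} {V : completeNormedModType R[i]} (u : nat -> V) :
  (forall e : R, 0 < e -> exists N, forall m p, (N <= m)%N -> (N <= p)%N ->
     nrm (u m - u p) < e) ->
  exists L, forall e : R, 0 < e -> exists N, forall m, (N <= m)%N -> nrm (u m - L) < e.
Proof.
move=> u_cauchy.
have : cauchy (u @ \oo).
  apply/cauchyP => eps eps0.
  have /andP[/eqP epsIm epsRe] : (complex.Im eps == 0) && (0 < complex.Re eps).
    by move: eps0; rewrite ltcE.
  have [N HN] := u_cauchy _ epsRe.
  exists (u N), N => // m /= Nm.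
  by rewrite -ball_normE /= norm_nrm ltcE /= epsIm eqxx /= HN.
move=> /cauchy_cvg /cvgrPdist_lt uL; exists (lim (u @ \oo)) => e e0.
have [N _ HN] := uL e%:C (ltac:(by rewrite ltcR)).
exists N => m /HN; by rewrite norm_nrm ltcR nrm_distC.
Qed.

Lemma cauchy_cvg_bound {R : realType} {V : completeNormedModType R[i]}
    (u : nat -> V) (b : nat -> R) :
  (forall m p, (m <= p)%N -> nrm (u p - u m) <= b m) ->
  (forall e, 0 < e -> exists N, forall m, (N <= m)%N -> b m < e) ->
  exists L, forall m, nrm (u m - L) <= b m.
Proof.
move=> ub b0.
have [L uL] : exists L, forall e : R, 0 < e ->
    exists N, forall m, (N <= m)%N -> nrm (u m - L) < e.
  apply: nrm_cauchy_cvg => e /b0 [N bN]; exists N => m p Nm Np.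
  have [mp|/ltnW pm] := leqP m p.
    by rewrite nrm_distC; exact: le_lt_trans (ub _ _ mp) (bN _ Nm).
  exact: le_lt_trans (ub _ _ pm) (bN _ Np).
exists L => m; apply/ler_addgt0Pr => e /uL [N uN].
set p := maxn m N.
rewrite -(subrK (u p) (u m)) -addrA; apply: le_trans (ler_nrmD _ _) _.
apply: lerD; last exact/ltW/uN/leq_maxr.
by rewrite nrm_distC; apply: ub; exact: leq_maxl.
Qed.

Section Product.
Context {R : realType} {I : finType} {Y : I -> normedModType R[i]}.
Local Notation V := (forall i, Y i).
Implicit Types (x y z : V).

Definition mdist x y : R := mnorm Y (fun i => x i - y i).

Lemma mnorm_ge0 x : 0 <= mnorm Y x.
Proof. by apply: sumr_ge0 => i _; exact: nrm_ge0. Qed.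

Lemma nrm_le_mnorm x i : nrm (x i) <= mnorm Y x.
Proof. by rewrite /mnorm (bigD1 i) //= lerDl; apply: sumr_ge0 => j _; exact: nrm_ge0. Qed.

Lemma ler_sum_nrm_mnorm (P : pred I) x : \sum_(i | P i) nrm (x i) <= mnorm Y x.
Proof.
by rewrite [leRHS](bigID P) /= lerDl; apply: sumr_ge0 => i _; exact: nrm_ge0.
Qed.

Lemma mdist_ge0 x y : 0 <= mdist x y.
Proof. exact: mnorm_ge0. Qed.

Lemma mdistC x y : mdist x y = mdist y x.
Proof. by apply: eq_bigr => i _; rewrite nrm_distC. Qed.

Lemma ler_mdist_triangle x y z : mdist x z <= mdist x y + mdist y z.
Proof.
rewrite /mdist /mnorm -big_split /=; apply: ler_sum => i _.
by apply: le_trans (ler_nrmD _ _); rewrite addrA subrK.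
Qed.

Lemma mdistx0 x : mdist x (fun i => 0) = mnorm Y x.
Proof. by apply: eq_bigr => i _; rewrite subr0. Qed.

Lemma mdist_le0_eq x y : mdist x y <= 0 -> x = y.
Proof.
move=> xy0; have /eqP : mdist x y = 0 by apply/eqP; rewrite eq_le xy0 mdist_ge0.
rewrite psumr_eq0 => [/allP xy|i _]; last exact: nrm_ge0.
apply: functional_extensionality_dep => i; apply/eqP; rewrite -subr_eq0.
by apply/eqP/nrm0_eq0/eqP/xy; exact: mem_index_enum.
Qed.

Lemma mdist_le_card x y (c : R) : (forall i, nrm (x i - y i) <= c) ->
  mdist x y <= #|I|%:R * c.
Proof.
move=> xy_le; apply: le_trans (_ : \sum_(i : I) c <= _).
  by apply: ler_sum => i _.
by rewrite sumr_const mulr_natl.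
Qed.

End Product.

Section Banach.
Context {R : realType} {I : finType} {Y : I -> completeNormedModType R[i]}.
Local Notation V := (forall i, Y i).

Lemma mdist_cauchy_cvg_bound (u : nat -> V) (b : nat -> R) :
  (forall m p, (m <= p)%N -> mdist (u p) (u m) <= b m) ->
  (forall e, 0 < e -> exists N, forall m, (N <= m)%N -> b m < e) ->
  exists L, forall m, mdist (u m) L <= #|I|%:R * b m.
Proof.
move=> ub b0.
have uiL i : exists L, forall m, nrm (u m i - L) <= b m.
  apply: cauchy_cvg_bound b0 => m p mp.
  exact: le_trans (nrm_le_mnorm (fun j => u p j - u m j) i) (ub _ _ mp).
exists (fun i => projT1 (cid (uiL i))) => m.
by apply: mdist_le_card => i; exact: (projT2 (cid (uiL i))).
Qed.

Variables (G : V -> V) (q : R).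
Hypotheses (q01 : 0 <= q < 1) (G_contr : forall z w, mdist (G z) (G w) <= q * mdist z w).

Lemma contraction_fixpoint_unique z w : G z = z -> G w = w -> z = w.
Proof.
move=> Gz Gw; apply: mdist_le0_eq.
have : (1 - q) * mdist z w <= 0 by rewrite mulrBl mul1r subr_le0 -{1}Gz -{1}Gw.
by rewrite pmulr_rle0 // subr_gt0; case/andP: q01.
Qed.

Lemma contraction_fixpoint : exists z, G z = z.
Proof.
have /andP[q0 q1] := q01.
pose u m := iter m G (fun i => 0).
pose c := mdist (u 1%N) (u 0%N) / (1 - q).
have c0 : 0 <= c by rewrite divr_ge0 ?mdist_ge0 // subr_ge0 ltW.
have u_step m : mdist (u m.+1) (u m) <= (1 - q) * c * q ^+ m.
  rewrite [(1 - q) * c]mulrC divfK ?subr_eq0 ?gt_eqF //.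
  elim: m => [|m IH]; first by rewrite expr0 mulr1.
  by apply: le_trans (G_contr _ _) _; rewrite exprS mulrCA ler_wpM2l.
have u_tele m d : mdist (u (m + d)%N) (u m) <= c * (q ^+ m - q ^+ (m + d)).
  elim: d => [|d IH].
    by rewrite addn0 subrr mulr0 /mdist /mnorm big1 // => i _; rewrite subrr nrm0.
  apply: le_trans (ler_mdist_triangle _ (u (m + d)%N) _) _.
  rewrite addnS; apply: le_trans (lerD (u_step _) IH) _.
  by rewrite exprS; lra.
have u_inc m p : (m <= p)%N -> mdist (u p) (u m) <= c * q ^+ m.
  move=> /subnKC <-; apply: le_trans (u_tele _ _) _.
  by rewrite ler_wpM2l // lerBlDr lerDl exprn_ge0.
have [L uL] := mdist_cauchy_cvg_bound _ _ u_inc (geometric_lt_eventually c _ q01).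
exists L; apply: mdist_le0_eq.
have cI0 : 0 <= #|I|%:R * c by rewrite mulr_ge0.
apply: (@le0_geometric _ _ (#|I|%:R * c * 2) q q01) => m.
have uS : u m.+1 = G (u m) by [].
apply: le_trans (ler_mdist_triangle _ (G (u m)) _) _.
rewrite addrC [mdist (G L) _]mdistC -{1}uS.
apply: le_trans (lerD (uL m.+1) (G_contr (u m) L)) _.
have := ler_wpM2l q0 (uL m).
have : #|I|%:R * c * q ^+ m.+1 <= #|I|%:R * c * q ^+ m.
  by apply: (ler_wpM2l cI0); rewrite exprS ler_piMl ?exprn_ge0 // ltW.
have : q * (#|I|%:R * c * q ^+ m) <= #|I|%:R * c * q ^+ m.
  by apply: ler_piMl; [rewrite mulr_ge0 ?exprn_ge0 | exact: ltW].
lra.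
Qed.

End Banach.

Section LinearFun.
Context {R : realType} {U V : normedModType R[i]} {T : U -> V}.
Hypothesis T_lin : linear T.

Lemma linear_funB x y : T (x - y) = T x - T y.
Proof. exact: (zmod_morphism_linear T_lin x y). Qed.

Lemma linear_fun0 : T 0 = 0.
Proof. by rewrite -(subrr 0) linear_funB subrr. Qed.

Lemma linear_funZ a x : T (a *: x) = a *: T x.
Proof. exact: (scalable_linear T_lin a x). Qed.

Lemma linear_fun_sum (J : Type) (r : seq J) (P : pred J) (F : J -> U) :
  T (\sum_(j <- r | P j) F j) = \sum_(j <- r | P j) T (F j).
Proof.
have TD : {morph T : x y / x + y} by move=> x y; have := T_lin 1 x y; rewrite !scale1r.
exact: (big_morph _ TD linear_fun0).
Qed.

Lemma opnorm_le v : ((nrm (T v))%:E <= opnorm T * (nrm v)%:E)%E.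
Proof.
have [v0|v_neq0] := eqVneq (nrm v) 0.
  by rewrite v0 mule0 (nrm0_eq0 _ v0) linear_fun0 nrm0.
have v_gt0 : 0 < nrm v by rewrite lt0r v_neq0 nrm_ge0.
pose w := ((nrm v)^-1)%:C *: v.
have nrmZinv x : nrm (((nrm v)^-1)%:C *: x) = (nrm v)^-1 * nrm x.
  by rewrite nrmZ normc_def /= expr0n addr0 sqrtr_sqr ger0_norm ?invr_ge0 ?nrm_ge0.
have Tw_le : ((nrm (T w))%:E <= opnorm T)%E.
  by apply: ereal_sup_ubound; exists w => //=; rewrite nrmZinv mulVf.
rewrite /w linear_funZ nrmZinv in Tw_le.
rewrite -(mulfVK v_neq0 (nrm (T v))) [_ / _]mulrC EFinM.
by apply: lee_wpmul2r => //; rewrite lee_fin nrm_ge0.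
Qed.

End LinearFun.

Lemma opnorm_ge0 {R : realType} {U V : normedModType R[i]} (T : U -> V) :
  (0 <= opnorm T)%E.
Proof.
apply: le_trans (_ : (nrm (T 0))%:E <= _)%E; first by rewrite lee_fin nrm_ge0.
by apply: ereal_sup_ubound; exists 0 => //; rewrite /= nrm0.
Qed.

Lemma uniform_bound {R : realType} {I : finType} (P : I -> R -> Prop) (b : \bar R) :
  (forall i c c', P i c -> c <= c' -> P i c') -> (0 < b)%E ->
  (forall i, exists2 c, (c%:E < b)%E & P i c) ->
  exists c, [/\ 0 <= c, (c%:E < b)%E & forall i, P i c].
Proof.
move=> P_mono b_gt0 bounded.
have [f [f_lt P_f]] : exists f : I -> R,
    (forall i, (f i)%:E < b)%E /\ (forall i, P i (f i)).
  exists (fun i => projT1 (cid2 (bounded i))).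
  by split=> i; case: (projT2 (cid2 (bounded i))).
clear bounded.
exists (\big[Num.max/0]_i f i); split.
- exact: bigmax_ge_id.
- case: b b_gt0 f_lt => [r r_gt0 f_lt | _ _ | //]; last exact: ltey.
  by rewrite lte_fin; apply: bigmax_lt => // i _; rewrite -lte_fin.
- by move=> i; apply: P_mono (P_f i) _; exact: le_bigmax.
Qed.

Lemma bdd_invertible_conj {R : realType} {Z : Type} (nz : Z -> R) (Dom : set Z)
    (L T P Q : Z -> Z) (c : R) :
  0 <= c -> (forall z, nz (P z) <= c * nz z) ->
  (forall z, Dom (P z)) -> (forall x, Dom x -> P (Q x) = x) ->
  (forall z, L (P z) = T z) ->
  bdd_invertible nz setT T -> bdd_invertible nz Dom L.
Proof.
move=> c0 P_bound P_Dom PQ LP [Tinv [TTinv [TinvT [c' Tinv_bound]]]].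
exists (fun y => P (Tinv y)); split; [|split].
- by move=> y; rewrite LP; split; [exact: P_Dom | exact: (TTinv y).2].
- by move=> x Dx; rewrite -{1}(PQ x Dx) LP TinvT ?PQ.
- exists (c * c') => y; rewrite -mulrA.
  exact: le_trans (P_bound _) (ler_wpM2l c0 (Tinv_bound y)).
Qed.

Section Elimination.
Context {R : realType} {I : finType} {X : I -> completeNormedModType R[i]}.
Variables (K : forall i j, X j -> X i) (k : I).
Local Notation V := (forall i, X i).
Implicit Types (y z w : V).

Definition one_minus z : V := fun i => z i - \sum_(j | j != i) K i j (z j).

Definition reduced i j (v : X j) : X i :=
  K i k (K k j v) + (if i == j then 0 else K i j v).

(* Its fixed points are the solutions of [one_minus z = y] with [z k] discarded. *)
Definition reduced_step y z : V := fun i =>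
  if i == k then 0 else y i + K i k (y k) + \sum_(j | j != k) reduced i j (z j).

Hypothesis K_lin : forall i j, linear (K i j).

Lemma reduced_linear i j : linear (reduced i j).
Proof.
move=> a u v; rewrite /reduced !K_lin.
by case: (i == j); rewrite ?addr0 // scalerDr addrACA.
Qed.

Lemma one_minus_eliminate z i : i != k ->
  one_minus z i = z i - K i k (one_minus z k) - \sum_(j | j != k) reduced i j (z j).
Proof.
move=> ik; rewrite /one_minus (bigD1 k) 1?eq_sym //=.
rewrite (linear_funB (K_lin i k)) (linear_fun_sum (K_lin i k)) /reduced big_split /=.
have -> : \sum_(j | j != k) (if i == j then 0 else K i j (z j)) =
          \sum_(j | (j != i) && (j != k)) K i j (z j).
  rewrite big_mkcond [RHS]big_mkcond; apply: eq_bigr => j _.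
  by rewrite [i == j]eq_sym; case: (j == i); case: (j == k).
set a := z i; set b := K i k (z k); set p := \sum_(j | j != k) _; set s := \sum_(j | _) _.
by rewrite opprB !opprD !addrA [a + p - b]addrAC addrK.
Qed.

Variables (B q : R).
Hypotheses (B_ge0 : 0 <= B) (q01 : 0 <= q < 1).
Hypothesis K_bound : forall i j, i != j -> forall v, nrm (K i j v) <= B * nrm v.
Hypothesis reduced_bound :
  forall j, j != k -> forall v, \sum_(i | i != k) nrm (reduced i j v) <= q * nrm v.

Lemma reduced_step_contraction y z w :
  mdist (reduced_step y z) (reduced_step y w) <= q * mdist z w.
Proof.
rewrite /mdist /mnorm (bigD1 k) //= /reduced_step eqxx subrr nrm0 add0r.
apply: (@le_trans _ _ (\sum_(i | i != k) \sum_(j | j != k) nrm (reduced i j (z j - w j)))).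
  apply: ler_sum => i ik; rewrite (negbTE ik) opprD addrACA subrr add0r -sumrB.
  apply: le_trans (ler_nrm_sum _ _ _) _; apply: ler_sum => j _.
  by rewrite (linear_funB (reduced_linear i j)).
rewrite exchange_big /= mulr_sumr.
apply: le_trans (_ : \sum_(j | j != k) q * nrm (z j - w j) <= _).
  by apply: ler_sum => j jk; exact: reduced_bound.
rewrite -!mulr_sumr ler_wpM2l //; first by case/andP: q01.
exact: (ler_sum_nrm_mnorm _ (fun j => z j - w j)).
Qed.

Definition reduced_sol y : V :=
  projT1 (cid (contraction_fixpoint _ _ q01 (reduced_step_contraction y))).

Lemma reduced_solP y : reduced_step y (reduced_sol y) = reduced_sol y.
Proof. by rewrite /reduced_sol; case: cid. Qed.

Definition one_minus_inv y : V :=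
  eqtype.dfwith (reduced_sol y) (y k + \sum_(j | j != k) K k j (reduced_sol y j)).

Lemma one_minus_inv_out y i : i != k -> one_minus_inv y i = reduced_sol y i.
Proof. by move=> ik; rewrite /one_minus_inv dfwith_out // eq_sym. Qed.

Lemma one_minusK y : one_minus (one_minus_inv y) = y.
Proof.
have zk : one_minus (one_minus_inv y) k = y k.
  rewrite /one_minus {1}/one_minus_inv dfwith_in.
  rewrite [X in _ - X](eq_bigr (fun j => K k j (reduced_sol y j))) ?addrK //.
  by move=> j jk; rewrite one_minus_inv_out.
apply: functional_extensionality_dep => i; have [->|ik] := eqVneq i k; first exact: zk.
rewrite one_minus_eliminate // zk one_minus_inv_out //.
under eq_bigr => j jk do rewrite one_minus_inv_out //.
have /(congr1 (fun f => f i)) := reduced_solP y; rewrite /reduced_step (negbTE ik) => <-.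
by rewrite addrAC !addrK.
Qed.

Lemma one_minus_invK z : one_minus_inv (one_minus z) = z.
Proof.
set y := one_minus z; pose w : V := fun i => if i == k then 0 else z i.
have sum_w i : \sum_(j | j != k) reduced i j (w j) = \sum_(j | j != k) reduced i j (z j).
  by apply: eq_bigr => j jk; rewrite /w (negbTE jk).
have w_fix : reduced_step y w = w.
  apply: functional_extensionality_dep => i; rewrite /reduced_step /w.
  have [//|ik] := eqVneq i k.
  by rewrite sum_w {1}/y one_minus_eliminate // -/y addrAC !subrK.
have w_sol : reduced_sol y = w.
  exact: contraction_fixpoint_unique _ _ q01 (reduced_step_contraction y) _ _
    (reduced_solP y) w_fix.
apply: functional_extensionality_dep => i; have [->|ik] := eqVneq i k.
  rewrite /one_minus_inv dfwith_in w_sol.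
  under eq_bigr => j jk do rewrite /w (negbTE jk).
  exact: subrK.
by rewrite one_minus_inv_out // w_sol /w (negbTE ik).
Qed.

Lemma reduced_sol_bound y :
  mnorm X (reduced_sol y) <= (1 + #|I|%:R * B) / (1 - q) * mnorm X y.
Proof.
have [q0 q1] := andP q01.
have step0 : mnorm X (reduced_step y (fun i => 0)) <= (1 + #|I|%:R * B) * mnorm X y.
  apply: le_trans (_ : \sum_i (nrm (y i) + B * mnorm X y) <= _).
    apply: ler_sum => i _; rewrite /reduced_step; have [_|ik] := eqVneq i k.
      by rewrite nrm0 addr_ge0 ?nrm_ge0 ?mulr_ge0 ?mnorm_ge0.
    rewrite big1 => [|j _]; last exact: linear_fun0 (reduced_linear i j).
    rewrite addr0; apply: le_trans (ler_nrmD _ _) (lerD (lexx _) _).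
    exact: le_trans (K_bound _ _ ik _) (ler_wpM2l B_ge0 (nrm_le_mnorm y k)).
  by rewrite big_split /= sumr_const mulrDl mul1r -mulrA mulr_natl.
have fix_le : mnorm X (reduced_sol y) <=
    q * mnorm X (reduced_sol y) + (1 + #|I|%:R * B) * mnorm X y.
  rewrite -mdistx0 -{1}(reduced_solP y).
  apply: le_trans (ler_mdist_triangle _ (reduced_step y (fun i => 0)) _) _.
  by apply: lerD; [exact: reduced_step_contraction | rewrite mdistx0].
rewrite mulrAC ler_pdivlMr ?subr_gt0 //.
have := mnorm_ge0 (reduced_sol y); nra.
Qed.

Lemma one_minus_inv_bound y : mnorm X (one_minus_inv y) <=
  (1 + (B + 1) * ((1 + #|I|%:R * B) / (1 - q))) * mnorm X y.
Proof.
set w := reduced_sol y; set M := (1 + #|I|%:R * B) / (1 - q).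
have yk_le : nrm (y k + \sum_(j | j != k) K k j (w j)) <= mnorm X y + B * mnorm X w.
  apply: le_trans (ler_nrmD _ _) (lerD (nrm_le_mnorm y k) _).
  apply: le_trans (ler_nrm_sum _ _ _) _.
  apply: le_trans (_ : \sum_(j | j != k) B * nrm (w j) <= _).
    by apply: ler_sum => j jk; apply: K_bound; rewrite eq_sym.
  by rewrite -mulr_sumr ler_wpM2l // ler_sum_nrm_mnorm.
rewrite [mnorm _ _]/mnorm (bigD1 k) //= {1}/one_minus_inv dfwith_in -/w.
rewrite (eq_bigr (fun i => nrm (w i))) => [|i ik]; last by rewrite one_minus_inv_out.
have w_le : mnorm X w <= M * mnorm X y by exact: reduced_sol_bound.
have := ler_wpM2l B_ge0 w_le; have := ler_sum_nrm_mnorm (fun i => i != k) w.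
lra.
Qed.

Lemma one_minus_bdd_invertible : bdd_invertible (mnorm X) setT one_minus.
Proof.
exists one_minus_inv; split; [|split].
- by move=> y; rewrite one_minusK.
- by move=> z _; exact: one_minus_invK.
- by eexists; exact: one_minus_inv_bound.
Qed.

End Elimination.

Lemma reduced_column_le {R : realType} {I : finType} {X : I -> completeNormedModType R[i]}
    (K : forall i j, X j -> X i) (k j : I) (v : X j) :
  (forall i j, linear (K i j)) ->
  ((\sum_(i | i != k) nrm (reduced K k i j v))%:E <=
   (\sum_(i | i != k) (opnorm (fun x => K i k (K k j x)) +
      (if i == j then 0 else opnorm (K i j)))) * (nrm v)%:E)%E.
Proof.
move=> K_lin; rewrite ge0_sume_distrl => [|i _]; last first.
  by apply: adde_ge0; [exact: opnorm_ge0 | case: (i == j) => //; exact: opnorm_ge0].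
rewrite -sumEFin; apply: lee_sum => i _.
have KK_lin : linear (fun x => K i k (K k j x)) by move=> a x y; rewrite !K_lin.
apply: le_trans (_ : (nrm (K i k (K k j v)) +
    (if i == j then 0 else nrm (K i j v)))%:E <= _)%E.
  by rewrite lee_fin; apply: le_trans (ler_nrmD _ _) _; case: (i == j); rewrite ?nrm0.
rewrite EFinD ge0_muleDl ?opnorm_ge0 //; last by case: (i == j) => //; exact: opnorm_ge0.
apply: leeD; first by have /= := opnorm_le KK_lin v.
by case: (i == j); [rewrite mul0e | have /= := opnorm_le (K_lin i j) v].
Qed.

Section ShiftedMatrix.
Context {R : realType} {I : finType} {X : I -> completeNormedModType R[i]}.
Variables (A : forall i j, X j -> X i) (D : forall i j : I, set (X j)) (l : R[i]).
Variable (Rs : forall j, X j -> X j).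
Hypothesis A_lin : forall i j, linear_on (D i j) (A i j).
Hypothesis A_rel : forall i j, i != j -> rel_bounded (D j j) (A j j) (D i j) (A i j).
Hypothesis Rs_res : forall j, is_resolvent (D j j) (A j j) l (Rs j).
Hypothesis Rs_bdd : forall j, exists c : R, forall y, nrm (Rs j y) <= c * nrm y.

Lemma resolvent_dom j y : D j j (Rs j y).
Proof. exact: ((Rs_res j).1 y).1. Qed.

Lemma resolventK j y : l *: Rs j y - A j j (Rs j y) = y.
Proof. exact: ((Rs_res j).1 y).2. Qed.

Lemma shiftK j x : D j j x -> Rs j (l *: x - A j j x) = x.
Proof. exact: (Rs_res j).2. Qed.

Lemma resolvent_linear j : linear (Rs j).
Proof.
move=> a x y; have [[_ D_sub] A_lin_jj] := A_lin j j.
set w := a *: Rs j x + Rs j y.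
have -> : a *: x + y = l *: w - A j j w.
  rewrite /w A_lin_jj; try exact: resolvent_dom.
  rewrite scalerDr scalerA [l * a]mulrC -scalerA.
  by rewrite opprD addrACA -scalerBr !resolventK.
by rewrite shiftK //; apply: D_sub; exact: resolvent_dom.
Qed.

Definition coupling i j (v : X j) : X i := A i j (Rs j v).

Lemma coupling_linear i j : linear (coupling i j).
Proof.
move=> a x y; rewrite /coupling resolvent_linear (A_lin i j).2 //.
all: have [->|ij] := eqVneq i j; first exact: resolvent_dom.
all: exact: (A_rel _ _ ij).1 _ (resolvent_dom _ _).
Qed.

Lemma shift_resolvent (z : forall i, X i) i :
  l *: Rs i (z i) - mapply X A (fun j => Rs j (z j)) i = one_minus coupling z i.
Proof. by rewrite /mapply (bigD1 i) //= opprD addrA resolventK. Qed.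

Lemma resolvent_uniform_bound :
  exists c, 0 <= c /\ forall j y, nrm (Rs j y) <= c * nrm y.
Proof.
have [] := @uniform_bound R I (fun j c => forall y, nrm (Rs j y) <= c * nrm y) +oo%E.
- by move=> j c c' Rs_c cc' y; exact: le_trans (Rs_c y) (ler_wpM2r (nrm_ge0 y) cc').
- exact: ltry.
- by move=> j; have [c Rs_c] := Rs_bdd j; exists c; first exact: ltry.
- by move=> c [c0 _ Rs_c]; exists c.
Qed.

Lemma coupling_bound i j : i != j -> exists c, forall v, nrm (coupling i j v) <= c * nrm v.
Proof.
move=> ij; have [_ [a [b [a0 [b0 A_le]]]]] := A_rel _ _ ij.
have [c [c0 Rs_le]] := resolvent_uniform_bound.
exists (a * c + b * (complex.Re `|l| * c + 1)) => v.
apply: le_trans (A_le _ (resolvent_dom j v)) _.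
have -> : A j j (Rs j v) = l *: Rs j v - v.
  by rewrite -[X in _ - X](resolventK j v) opprB addrC subrK.
have Rs_le_v := Rs_le j v.
have shift_le : nrm (l *: Rs j v - v) <= (complex.Re `|l| * c + 1) * nrm v.
  apply: le_trans (ler_nrmD _ _) _; rewrite nrmN nrmZ mulrDl mul1r -mulrA.
  by apply: lerD => //; apply: ler_wpM2l Rs_le_v; exact: Re_norm_ge0.
have := ler_wpM2l a0 Rs_le_v; have := ler_wpM2l b0 shift_le; lra.
Qed.

Lemma coupling_uniform_bound :
  exists B, 0 <= B /\ forall i j, i != j -> forall v, nrm (coupling i j v) <= B * nrm v.
Proof.
have [] := @uniform_bound R (I * I)%type (fun ij c => ij.1 != ij.2 ->
  forall v, nrm (coupling ij.1 ij.2 v) <= c * nrm v) +oo%E.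
- move=> [i j] c c' K_c cc' /= ij v.
  exact: le_trans (K_c ij v) (ler_wpM2r (nrm_ge0 v) cc').
- exact: ltry.
- move=> [i j]; have [ij|/eqP ij] := boolP (i != j).
    by have [c K_c] := coupling_bound _ _ ij; exists c; [exact: ltry | move=> _].
  by exists 0; [exact: ltry | move=> /eqP].
- by move=> B [B0 _ K_B]; exists B; split => // i j; exact: (K_B (i, j)).
Qed.

Variables (k : I) (q : R).
Hypothesis q01 : 0 <= q < 1.
Hypothesis reduced_bound : forall j, j != k ->
  forall v, \sum_(i | i != k) nrm (reduced coupling k i j v) <= q * nrm v.

Lemma shifted_bdd_invertible :
  bdd_invertible (mnorm X) (mdom X (fun i => D i i)) (fun x i => l *: x i - mapply X A x i).
Proof.
have [c [c0 Rs_le]] := resolvent_uniform_bound.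
have [B [B0 K_le]] := coupling_uniform_bound.
apply: (@bdd_invertible_conj _ _ _ _ _ (one_minus coupling)
  (fun z i => Rs i (z i)) (fun x i => l *: x i - A i i (x i)) c c0).
- by move=> z; rewrite /mnorm mulr_sumr; apply: ler_sum => i _; exact: Rs_le.
- by move=> z i; exact: resolvent_dom.
- by move=> x Dx; apply: functional_extensionality_dep => i; exact: shiftK.
- by move=> z; apply: functional_extensionality_dep => i; exact: shift_resolvent.
- exact: one_minus_bdd_invertible _ k coupling_linear _ _ B0 q01 K_le reduced_bound.
Qed.

End ShiftedMatrix.

Arguments coupling_linear {R I X A D l Rs}.
Arguments shifted_bdd_invertible {R I X A D l Rs} A_lin A_rel Rs_res Rs_bdd {k q}.

Lemma resolvent_of_not_spectrum {R : realType} {V : normedModType R[i]}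
    {D : set V} {T : V -> V} {l : R[i]} :
  ~ spectrum D T l ->
  exists Rv, is_resolvent D T l Rv /\ exists c : R, forall y, nrm (Rv y) <= c * nrm y.
Proof.
by move=> /contrapT [Rv [RvK [KRv Rv_bdd]]]; exists Rv; split => //; split.
Qed.

Lemma Rstar_ge0 {R : realType} {n : nat} {X : 'I_n -> normedModType R[i]}
    (A : forall i j, X j -> X i) (k j : 'I_n) Rk Rj :
  (0 <= Rstar X A k j Rk Rj)%E.
Proof.
apply: sume_ge0 => i _; apply: adde_ge0; first exact: opnorm_ge0.
by case: (i == j) => //; exact: opnorm_ge0.
Qed.

Lemma Rstar_contraction {R : realType} {n : nat} {X : 'I_n -> completeNormedModType R[i]}
    {A : forall i j, X j -> X i} {Rs : forall j, X j -> X j} {k : 'I_n} :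
  (forall i j, linear (coupling A Rs i j)) ->
  (forall j, j != k -> (Rstar X A k j (Rs k) (Rs j) < 1)%E) ->
  exists q, 0 <= q < 1 /\ forall j, j != k ->
    forall v, \sum_(i | i != k) nrm (reduced (coupling A Rs) k i j v) <= q * nrm v.
Proof.
move=> K_lin Rstar_lt1.
have [] := @uniform_bound R 'I_n (fun j c => j != k ->
  forall v, \sum_(i | i != k) nrm (reduced (coupling A Rs) k i j v) <= c * nrm v) 1%E.
- move=> j c c' red_c cc' jk v.
  exact: le_trans (red_c jk v) (ler_wpM2r (nrm_ge0 v) cc').
- exact: lte01.
- move=> j; have [jk|/eqP jk] := boolP (j != k); last by exists 0 => // /eqP.
  set r := Rstar X A k j (Rs k) (Rs j).
  have r_fin : r \is a fin_num.
    by rewrite ge0_fin_numE ?Rstar_ge0 //; apply: lt_trans (Rstar_lt1 j jk) (ltey 1).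
  exists (fine r); first by rewrite fineK // Rstar_lt1.
  move=> _ v; rewrite -lee_fin EFinM fineK //.
  exact: reduced_column_le.
- by move=> q [q0 q1 red_q]; exists q; split => //; apply/andP; split; rewrite -?lte_fin.
Qed.

Lemma exists_ord_neq {n : nat} (k : 'I_n) : (1 < n)%N -> exists j : 'I_n, j != k.
Proof.
case: n k => [|[|n]] k // _.
by have [->|k0] := eqVneq k ord0; [exists ord_max | exists ord0; rewrite eq_sym].
Qed.

Theorem theorem5p2 (R : realType) (n : nat)
  (X : 'I_n -> completeNormedModType R[i])
  (A : forall i j : 'I_n, X j -> X i) (D : forall i j : 'I_n, set (X j)) :
  (2 <= n)%N ->
  (forall i j, linear_on (D i j) (A i j)) ->
  (forall i, closed_op (D i i) (A i i)) ->
  (forall i j, i != j -> rel_bounded (D j j) (A j j) (D i j) (A i j)) ->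
  (forall (p : 'S_n) (k : nat) (Hk : (k <= n)%N), (2 <= k)%N ->
     mclosed (fun i : 'I_k => X ((p^-1)%g (widen_ord Hk i)))
       (fun i : 'I_k => D ((p^-1)%g (widen_ord Hk i)) ((p^-1)%g (widen_ord Hk i)))
       (fun i j : 'I_k => A ((p^-1)%g (widen_ord Hk i)) ((p^-1)%g (widen_ord Hk j)))) ->
  forall l : R[i], mspectrum X (fun i => D i i) A l ->
  forall k : 'I_n, Sstar_k X A D k l.
Proof.
move=> n_ge2 A_lin _ A_rel _ l l_spec k; apply: contrapT => l_notin.
have l_notin_kj j : j != k -> ~ Sstar_kj X A D k j l by move=> jk ?; apply: l_notin; exists j.
have [j0 j0k] := exists_ord_neq k n_ge2.
have l_res j : ~ spectrum (D j j) (A j j) l.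
  have [->|jk] := eqVneq j k => l_spec_j.
    by apply: (l_notin_kj j0 j0k); left.
  by apply: (l_notin_kj j jk); right; left.
pose Rs j := projT1 (cid (resolvent_of_not_spectrum (l_res j))).
have [Rs_res Rs_bdd] : (forall j, is_resolvent (D j j) (A j j) l (Rs j)) /\
    (forall j, exists c : R, forall y, nrm (Rs j y) <= c * nrm y).
  by split=> j; case: (projT2 (cid (resolvent_of_not_spectrum (l_res j)))).
have Rstar_lt1 j : j != k -> (Rstar X A k j (Rs k) (Rs j) < 1)%E.
  move=> jk; rewrite ltNge; apply/negP => Rstar_ge1; apply: (l_notin_kj j jk).
  by right; right; split; [|split; [|exists (Rs k), (Rs j)]].
have [q [q01 reduced_le]] := Rstar_contraction (coupling_linear A_lin A_rel Rs_res) Rstar_lt1.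
exact: l_spec (shifted_bdd_invertible A_lin A_rel Rs_res Rs_bdd q01 reduced_le).
Qed.
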